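(* Let $G$ be a finite simple connected graph other than $K_2$ and let $U$ be a set of leaves of $G$. Then there exists a set $V$ of leaves of $\rho\circ\lambda(G)$ such that \[ \rho\circ\lambda\circ\rho\circ\lambda_U(G)=\rho\circ\lambda_V\circ\rho\circ\lambda(G). \]
   Context: A leaf is a vertex of degree one; two distinct vertices are siblings if they have the same closed neighborhood $N[v]=\{v\}\cup N(v)$. For a graph $G$ other than $K_2$ and a set $S$ of leaves of $G$, $\lambda_S(G)$ is the graph obtained by removing the vertices in $S$; $\lambda(G)$ denotes the graph obtained by removing all leaves of $G$. $\rho(G)$ is the graph obtained from $G$ by contracting each maximal group of siblings to a single vertex (adjacent to the common outside neighbors of the group). Equalities of graphs are understood up to the natural identification of vertices (i.e. as isomorphic graphs). *)

(* A finite simple graph is a symmetric irreflexive relation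
   e on a finType T; all graphs arising from it (by deleting vertices and
   contracting sibling classes) are represented as induced subgraphs of (T,e)
   on a vertex set V : {set T}. *)
From mathcomp Require Import all_boot.
Set Implicit Arguments. Unset Strict Implicit. Unset Printing Implicit Defensive.

Section Graphs.
Variables (T : finType) (e : rel T).

Definition nbhd (V : {set T}) (x : T) : {set T} := [set y in V | e x y].
Definition cnbhd (V : {set T}) (x : T) : {set T} := x |: nbhd V x.

Definition leaves (V : {set T}) : {set T} := [set x in V | #|nbhd V x| == 1].

Definition lamS (S V : {set T}) : {set T} := V :\: S.
Definition lam (V : {set T}) : {set T} := V :\: leaves V.

Definition siblings (V : {set T}) (x y : T) : bool :=
  [&& x \in V, y \in V, x != y & cnbhd V x == cnbhd V y].

(* rho : contract every maximal group of siblings to a single vertex.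
   The contracted vertex is represented by the member of the group with the
   least enum_rank; since siblings have identical closed neighbourhoods, its
   induced adjacency is exactly the common outside neighbourhood of the group. *)
Definition rho (V : {set T}) : {set T} :=
  [set x in V | [forall y, siblings V x y ==> (enum_rank x < enum_rank y)%N]].

Definition isK2 (V : {set T}) : Prop :=
  #|V| = 2 /\ {in V &, forall x y, x != y -> e x y}.

Definition iso (V1 V2 : {set T}) : Prop :=
  exists f : T -> T, [/\ bijective f, f @: V1 = V2 &
    {in V1 &, forall x y, e (f x) (f y) = e x y}].

End Graphs.

From mathcomp Require Import all_boot.
Set Implicit Arguments. Unset Strict Implicit. Unset Printing Implicit Defensive.

(* If A is a subset of B meeting every twin class of B, twins
   in A are twins in B and rho(A) is isomorphic to rho(B).

   Let H = lambda(G) and W = lambda_U(G), so H is contained in W.  Removing the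
   leaves of rho(W) removes the union [pruned] of those twin classes of W that
   are leaves of rho(W).  A leaf of G outside [pruned] is a twin in W of its
   neighbour, which is not a leaf since G is not K_2; hence H \ pruned meets
   every class of W \ pruned.  Let [core] be the union of the twin classes of H
   contained in [pruned].  Each of them is a leaf of rho(H): its neighbours in
   H outside the class all lie in the one W-class adjacent to the corresponding
   leaf of rho(W), and there is such a neighbour, for otherwise (lambda(G)
   being connected) the class would be all of H, whereas rho(W) has a vertex
   which is not a leaf.  So V := rho(H) meet core consists of leaves of rho(H),
   and rho(rho(W) \ pruned), rho(W \ pruned), rho(H \ pruned), rho(H \ core)
   and rho(rho(H) \ V) are all isomorphic. *)

Section Twins.
Variables (T : finType) (e : rel T).
Hypotheses (e_sym : symmetric e) (e_irr : irreflexive e).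
Implicit Types (A B D V : {set T}) (a b c l s u v w x y z : T).

Definition twin (V : {set T}) (x y : T) : bool :=
  [&& x \in V, y \in V & cnbhd e V x == cnbhd e V y].

Lemma in_cnbhd V x y : (y \in cnbhd e V x) = (y == x) || (y \in V) && e x y.
Proof. by rewrite !inE. Qed.

Lemma cnbhd_sym V x y : x \in V -> y \in V ->
  (y \in cnbhd e V x) = (x \in cnbhd e V y).
Proof. by rewrite !in_cnbhd => -> ->; rewrite eq_sym e_sym. Qed.

Lemma in_cnbhd_sub A B c w : A \subset B -> c \in A ->
  (w \in cnbhd e A c) = (w \in A) && (w \in cnbhd e B c).
Proof.
move=> sAB cA; rewrite !in_cnbhd.
have [-> | _] := eqVneq w c; first by rewrite cA.
by case wA : (w \in A); rewrite //= (subsetP sAB w wA).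
Qed.

Lemma twinP V x y :
  reflect [/\ x \in V, y \in V & cnbhd e V x = cnbhd e V y] (twin V x y).
Proof. by apply: (iffP and3P) => -[xV yV /eqP c]. Qed.

Lemma twin_refl V x : x \in V -> twin V x x.
Proof. by move=> xV; apply/twinP. Qed.

Lemma twin_sym V x y : twin V x y -> twin V y x.
Proof. by case/twinP => xV yV c; apply/twinP. Qed.

Lemma twin_trans V x y z : twin V x y -> twin V y z -> twin V x z.
Proof. by case/twinP => xV _ c1 /twinP[_ zV c2]; apply/twinP; rewrite c1 c2. Qed.

Lemma twin_sub A B x y : A \subset B -> x \in A -> y \in A ->
  twin B x y -> twin A x y.
Proof.
move=> sAB xA yA /twinP[_ _ c]; apply/twinP; split=> //.
by apply/setP => w; rewrite !(in_cnbhd_sub _ sAB) // c.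
Qed.

Lemma twin_adj V x x' y y' :
  twin V x x' -> twin V y y' -> ~~ twin V x y -> e x y -> e x' y'.
Proof.
move=> txx' tyy' ntxy exy.
have /twinP[_ x'V cx] := txx'; have /twinP[yV _ cy] := tyy'.
have ex'y : e x' y.
  have : y \in cnbhd e V x' by rewrite -cx in_cnbhd yV exy orbT.
  rewrite in_cnbhd yV /= => /orP[/eqP yx' | //].
  by rewrite yx' txx' in ntxy.
have : x' \in cnbhd e V y' by rewrite -cy in_cnbhd x'V e_sym ex'y orbT.
rewrite in_cnbhd x'V /= e_sym => /orP[/eqP x'y' | //].
have tx'y : twin V x' y by rewrite x'y'; apply: twin_sym.
by rewrite (twin_trans txx' tx'y) in ntxy.
Qed.

Lemma rho_sub V : rho e V \subset V.
Proof. by apply/subsetP => x; rewrite inE => /andP[]. Qed.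

Lemma rho_twin_eq V x y : x \in rho e V -> y \in rho e V -> twin V x y -> x = y.
Proof.
rewrite !inE => /andP[xV /forallP minx] /andP[yV /forallP miny] /twinP[_ _ c].
apply/eqP/negPn/negP => nxy.
have := minx y; have := miny x.
rewrite /siblings xV yV nxy eq_sym nxy c eqxx /= => /ltn_trans lt_yx /lt_yx.
by rewrite ltnn.
Qed.

Definition rep V x : T := [arg min_(r < x | twin V r x) enum_rank r].

Lemma repP V x : x \in V -> rep V x \in rho e V /\ twin V (rep V x) x.
Proof.
move=> xV; rewrite /rep; case: arg_minnP => [|r trx minr]; first exact: twin_refl.
have rV : r \in V by case/twinP: trx.
split=> //; rewrite inE rV; apply/forallP => y; apply/implyP => /and4P[_ yV nry cry].
have tyx : twin V y x by apply: twin_trans trx; apply/twinP; rewrite (eqP cry).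
rewrite ltn_neqAle minr // andbT.
by apply: contra nry => /eqP/val_inj/enum_rank_inj ->.
Qed.

Lemma eq_rep V x y : x \in V -> y \in V -> (rep V x == rep V y) = twin V x y.
Proof.
move=> xV yV; have [rx tx] := repP xV; have [ry ty] := repP yV.
apply/eqP/idP => [E | txy]; first by rewrite E in tx; apply: twin_trans (twin_sym tx) ty.
by apply: rho_twin_eq rx ry _; apply: twin_trans tx (twin_trans txy (twin_sym ty)).
Qed.

Lemma rep_twin V x y : twin V x y -> rep V x = rep V y.
Proof. by move=> txy; case/twinP: (txy) => xV yV _; apply/eqP; rewrite eq_rep. Qed.

Lemma rep_id V x : x \in rho e V -> rep V x = x.
Proof.
move=> xr; have [rr tr] := repP (subsetP (rho_sub V) x xr).
exact: rho_twin_eq rr xr tr.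
Qed.

Definition twin_cover (A B : {set T}) : Prop :=
  A \subset B /\ {in B, forall b, exists2 a, a \in A & twin B a b}.

Lemma rho_twin_cover V : twin_cover (rho e V) V.
Proof. by split=> [|b /repP[]]; [apply: rho_sub | exists (rep V b)]. Qed.

Lemma twin_cover_rhoD B D : (forall x y, twin B x y -> x \in D -> y \in D) ->
  twin_cover (rho e B :\: D) (B :\: D).
Proof.
move=> closD; split; first exact: setSD (rho_sub B).
move=> b /setDP[bB bD]; have [rr trb] := repP bB.
have rD : rep B b \notin D by apply: contra bD; apply: closD trb.
exists (rep B b); first by rewrite inE rD rr.
apply: twin_sub (subsetDl B D) _ _ trb; rewrite inE ?bD //.
by rewrite rD (subsetP (rho_sub B)).
Qed.

Lemma twin_cover_twin A B a a' : twin_cover A B -> twin A a a' -> twin B a a'.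
Proof.
move=> [sAB coverB] /twinP[aA a'A caa'].
have aB := subsetP sAB a aA; have a'B := subsetP sAB a' a'A.
apply/twinP; split=> //; apply/setP => z.
case zB : (z \in B); last first.
  have [za za'] : z != a /\ z != a' by split; apply: contraFneq zB => ->.
  by rewrite !in_cnbhd zB (negbTE za) (negbTE za').
have [z' z'A /twinP[_ _ cz']] := coverB z zB.
have moveA c : c \in A -> (z \in cnbhd e B c) = (z' \in cnbhd e A c).
  move=> cA; have cB := subsetP sAB c cA; have z'B := subsetP sAB z' z'A.
  rewrite cnbhd_sym // -cz' -cnbhd_sym //.
  by rewrite (in_cnbhd_sub _ sAB cA) z'A.
by rewrite !moveA // caa'.
Qed.

Lemma bij_extend (A : {set T}) (g : T -> T) :
  {in A &, injective g} -> exists2 f : T -> T, bijective f & {in A, f =1 g}.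
Proof.
move=> g_inj; set sA := enum (~: A); set sB := enum (~: (g @: A)).
have size_sAB : size sA = size sB.
  apply/(@addnI #|A|).
  by rewrite -{2}(card_in_imset g_inj) /sA /sB -!cardE !cardsC.
pose f x := if x \in A then g x else nth x sB (index x sA).
have f_out y : y \notin A -> f y \in ~: (g @: A).
  move=> yA; rewrite /f (negbTE yA) -[_ \in ~: _]mem_enum -/sB.
  by apply: mem_nth; rewrite -size_sAB index_mem /sA mem_enum inE.
exists f; last by move=> x xA; rewrite /f xA.
apply: injF_bij => x y.
case: (boolP (x \in A)) => xA; case: (boolP (y \in A)) => yA.
- by rewrite /f xA yA; apply: g_inj.
- by move=> fxy; have := f_out y yA; rewrite -fxy /f xA inE imset_f.
- by move=> fxy; have := f_out x xA; rewrite fxy /f yA inE imset_f.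
have xs : x \in sA by rewrite mem_enum inE.
have ys : y \in sA by rewrite mem_enum inE.
have iy : index y sA < size sB by rewrite -size_sAB index_mem.
rewrite /f (negbTE xA) (negbTE yA) (set_nth_default x _ iy) => /eqP.
rewrite nth_uniq ?enum_uniq -?size_sAB ?index_mem // => /eqP ixy.
by rewrite -(nth_index x xs) ixy nth_index.
Qed.

Lemma iso_sym A B : iso e A B -> iso e B A.
Proof.
case=> f [[g fK gK] fAB f_adj]; exists g; split; first by exists f.
  by rewrite -fAB -imset_comp -[RHS]imset_id; apply: eq_imset => x /=; rewrite fK.
by move=> x y; rewrite -fAB => /imsetP[x' x'A ->] /imsetP[y' y'A ->]; rewrite !fK f_adj.
Qed.

Lemma iso_trans A B C : iso e A B -> iso e B C -> iso e A C.
Proof.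
case=> f [f_bij fAB f_adj]; case=> f' [f'_bij f'BC f'_adj].
exists (f' \o f); split; first exact: bij_comp.
  by rewrite imset_comp fAB.
by move=> x y xA yA /=; rewrite f'_adj ?f_adj // -fAB imset_f.
Qed.

Lemma twin_cover_iso A B : twin_cover A B -> iso e (rho e A) (rho e B).
Proof.
move=> covAB; have [sAB coverB] := covAB.
have rA a : a \in rho e A -> a \in A := subsetP (rho_sub A) a.
have rB a : a \in rho e A -> a \in B by move/rA/(subsetP sAB).
have twinAB x y : x \in rho e A -> y \in rho e A -> twin B x y -> x = y.
  by move=> xr yr /(twin_sub sAB (rA x xr) (rA y yr)); apply: rho_twin_eq.
have rep_inj : {in rho e A &, injective (rep B)}.
  by move=> x y xr yr /eqP; rewrite eq_rep ?rB //; apply: twinAB.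
have [f f_bij f_rep] := bij_extend rep_inj.
exists f; split=> //.
  rewrite (eq_in_imset f_rep); apply/setP => b; apply/imsetP/idP => [[a ar ->] | br].
    by case: (repP (rB a ar)).
  have bB := subsetP (rho_sub B) b br.
  have [a0 a0A ta0b] := coverB b bB; have [ar taa0] := repP a0A.
  exists (rep A a0) => //; apply/esym/eqP; rewrite -(rep_id br) eq_rep ?bB ?rB //.
  exact: twin_trans (twin_cover_twin covAB taa0) ta0b.
move=> x y xr yr; rewrite !f_rep //.
have [_ tx] := repP (rB x xr); have [_ ty] := repP (rB y yr).
case: (boolP (twin B x y)) => [/(twinAB x y xr yr) <- | ntxy]; first by rewrite !e_irr.
apply/idP/idP; last exact: twin_adj (twin_sym tx) (twin_sym ty) ntxy.
apply: (twin_adj tx ty); apply: contra ntxy => t.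
exact: twin_trans (twin_sym tx) (twin_trans t ty).
Qed.

Lemma leafP V l : reflect (l \in V /\ exists s, forall v, (v \in V) && e l v = (v == s))
  (l \in leaves e V).
Proof.
rewrite inE; apply: (iffP andP) => -[lV nbl]; split=> //.
  by have [s /setP nbs] := cards1P nbl; exists s => v; have := nbs v; rewrite !inE.
by have [s nbs] := nbl; apply/cards1P; exists s; apply/setP => v; rewrite !inE nbs.
Qed.

Definition leaf_class V x : bool := (x \in V) && (rep V x \in leaves e (rho e V)).

Lemma leaf_class_twin V x y : twin V x y -> leaf_class V x = leaf_class V y.
Proof.
by move=> txy; case/twinP: (txy) => xV yV _; rewrite /leaf_class xV yV (rep_twin txy).
Qed.

Lemma leaf_classP V x : x \in V -> reflect
  (exists z, [/\ z \in V, e x z, ~~ twin V x z &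
     {in V, forall y, e x y -> ~~ twin V x y -> twin V y z}])
  (leaf_class V x).
Proof.
move=> xV; rewrite /leaf_class xV; have [pr tpx] := repP xV.
set p := rep V x in pr tpx *.
have rho_nontwin v : v \in rho e V -> e p v -> ~~ twin V p v.
  by move=> vr epv; apply/negP => /(rho_twin_eq pr vr) pv; rewrite pv e_irr in epv.
apply: (iffP idP) => [/leafP[_ [z nbp]] | [z [zV exz ntxz outz]]].
  have /andP[zr epz] : (z \in rho e V) && e p z by rewrite nbp.
  have ntpz := rho_nontwin z zr epz; have zV := subsetP (rho_sub V) z zr.
  exists z; split=> //.
  - exact: twin_adj tpx (twin_refl zV) ntpz epz.
  - by apply: contra ntpz; apply: twin_trans tpx.
  move=> y yV exy ntxy; have [ry tyy] := repP yV.
  have epy := twin_adj (twin_sym tpx) (twin_sym tyy) ntxy exy.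
  by have := nbp (rep V y); rewrite ry epy => /esym/eqP <-; apply: twin_sym.
have [qr tqz] := repP zV.
apply/leafP; split=> //; exists (rep V z) => v; apply/andP/eqP => [[vr epv] | ->].
  have ntpv := rho_nontwin v vr epv.
  have vV := subsetP (rho_sub V) v vr.
  have ntxv : ~~ twin V x v by apply: contra ntpv; apply: twin_trans tpx.
  have exv := twin_adj tpx (twin_refl vV) ntpv epv.
  exact: rho_twin_eq vr qr (twin_trans (outz v vV exv ntxv) (twin_sym tqz)).
by split=> //; apply: twin_adj (twin_sym tpx) (twin_sym tqz) ntxz exz.
Qed.

Lemma lam_rho V : lam e (rho e V) = rho e V :\: [set x | leaf_class V x].
Proof.
apply/setP => x; rewrite /lam !in_setD inE.
case: (boolP (x \in rho e V)) => [xr | _]; last by rewrite !andbF.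
by rewrite /leaf_class rep_id // (subsetP (rho_sub V)).
Qed.

Lemma rho_nonleaf V x : x \in V ->
  exists2 y, y \in rho e V & y \notin leaves e (rho e V).
Proof.
move=> /repP[rr _]; set r := rep V x in rr *.
case rl : (r \in leaves e (rho e V)); last by exists r; rewrite ?rl.
have /leafP[_ [a nbr]] := rl.
have /andP[ar era] : (a \in rho e V) && e r a by rewrite nbr.
case al : (a \in leaves e (rho e V)); last by exists a; rewrite ?al.
have /leafP[_ [b nba]] := al.
have br : b = r by apply/esym/eqP; rewrite -nba rr e_sym.
have tra : twin (rho e V) r a.
  by apply/twinP; split=> //; apply/setP => v; rewrite !in_cnbhd nbr nba br orbC.
have ra := rho_twin_eq rr ar (twin_cover_twin (rho_twin_cover V) tra).
by rewrite ra e_irr in era.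
Qed.

Section ConnectedGraph.
Hypotheses (e_conn : forall x y, connect e x y) (not_K2 : ~ isK2 e [set: T]).

Local Notation H := (lam e [set: T]).

Lemma in_nonleaves x : (x \in H) = (x \notin leaves e [set: T]).
Proof. by rewrite in_setD in_setT andbT. Qed.

Lemma leaf_neighbour l : l \in leaves e [set: T] -> exists s, forall v, e l v = (v == s).
Proof. by case/leafP => _ [s nbs]; exists s => v; rewrite -nbs in_setT. Qed.

Lemma leaf_neighbour_nonleaf l s : l \in leaves e [set: T] -> e l s ->
  s \notin leaves e [set: T].
Proof.
move=> /leaf_neighbour[s' nbl] els; apply/negP => /leaf_neighbour[l' nbs].
have ss' : s' = s by apply/esym/eqP; rewrite -nbl.
have ll' : l' = l by apply/esym/eqP; rewrite -nbs e_sym.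
subst s' l'; have ls : l != s by apply: contraTneq els => ->; rewrite e_irr.
have cl : closed e [set l; s].
  apply: (intro_closed (sym_connect_sym e_sym)) => u v euv.
  rewrite !inE => /orP[]/eqP uE; move: euv; rewrite uE ?nbl ?nbs => /eqP->;
  by rewrite eqxx ?orbT.
have all_ls v : v \in [set l; s] by rewrite -(closed_connect cl (e_conn l v)) !inE eqxx.
apply: not_K2; split.
  have -> : [set: T] = [set l; s] by apply/setP => v; rewrite in_setT all_ls.
  by rewrite cards2 ls.
move=> x y _ _; move: (all_ls x) (all_ls y); rewrite !inE.
by case/orP=> /eqP-> /orP[]/eqP->; rewrite ?eqxx // ?nbl ?nbs.
Qed.

Lemma nonleaves_closed (C : {set T}) x : x \in C ->
  (forall u v, u \in C -> v \in H -> e u v -> v \in C) -> H \subset C.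
Proof.
move=> xC closC; pose a := [set w | (w \in C) || [exists k in C, e k w]].
have adjC u w : u \in C -> e u w -> w \in a.
  by move=> uC euw; rewrite inE; apply/orP; right; apply/exists_inP; exists u.
have cla : closed e a.
  apply: (intro_closed (sym_connect_sym e_sym)) => u w euw.
  rewrite inE => /orP[uC | /exists_inP[k kC eku]]; first exact: adjC euw.
  case uH : (u \in H); first exact: adjC (closC k u kC uH eku) euw.
  move: uH; rewrite in_nonleaves => /negbFE/leaf_neighbour[s nbu].
  by move: eku euw; rewrite e_sym !nbu => /eqP<- /eqP->; rewrite inE kC.
apply/subsetP => v vH; move: (closed_connect cla (e_conn x v)); rewrite !inE xC.
by case/esym/orP => // /exists_inP[k kC ekv]; apply: closC ekv.
Qed.

Variable W : {set T}.
Hypothesis nonleaves_sub : H \subset W.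

Lemma leaf_twin_neighbour l : l \in W -> l \in leaves e [set: T] ->
  ~~ leaf_class W l -> exists2 s, s \in H & twin W l s.
Proof.
move=> lW ll nlc; have [s nbl] := leaf_neighbour ll.
have els : e l s by rewrite nbl.
have sH : s \in H by rewrite in_nonleaves (leaf_neighbour_nonleaf ll els).
have sW := subsetP nonleaves_sub s sH.
exists s => //; move: nlc; apply: contraNT => ntls.
apply/leaf_classP => //; exists s; split=> // y _.
by rewrite nbl => /eqP-> _; apply: twin_refl.
Qed.

Lemma nonleaf_class_exists x : x \in H -> exists2 y, y \in H & ~~ leaf_class W y.
Proof.
move=> /(subsetP nonleaves_sub) xW; have [r rr rnl] := rho_nonleaf xW.
have rW := subsetP (rho_sub W) r rr.
have nlc : ~~ leaf_class W r by rewrite /leaf_class (rep_id rr) (negbTE rnl) andbF.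
case rH : (r \in H); first by exists r.
move: rH; rewrite in_nonleaves => /negbFE rl.
have [s sH trs] := leaf_twin_neighbour rW rl nlc.
by exists s; rewrite // -(leaf_class_twin trs).
Qed.

Let pruned := [set x | leaf_class W x].
Let core := [set x | [forall y, twin H x y ==> (y \in pruned)]].

Lemma core_pruned x : x \in H -> x \in core -> x \in pruned.
Proof. by move=> xH; rewrite inE => /forallP/(_ x); rewrite twin_refl. Qed.

Lemma leaf_class_core x : x \in H -> x \in core -> leaf_class H x.
Proof.
move=> xH xC; have xW := subsetP nonleaves_sub x xH.
case: (boolP [exists z in H, e x z && ~~ twin H x z]).
  case/exists_inP => z zH /andP[exz ntxz].
  have := core_pruned xH xC; rewrite inE => /(leaf_classP xW)[z0 [_ _ _ out0]].
  have outW u : u \in H -> e x u -> ~~ twin H x u -> twin W u z0.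
    move=> uH exu ntxu; apply: out0 (subsetP nonleaves_sub u uH) exu _.
    by apply: contra ntxu; apply: twin_sub nonleaves_sub xH uH.
  apply/leaf_classP => //; exists z; split=> // y yH exy ntxy.
  apply: (twin_sub nonleaves_sub yH zH).
  exact: twin_trans (outW y yH exy ntxy) (twin_sym (outW z zH exz ntxz)).
move/exists_inPn => no_out; have [y yH nly] := nonleaf_class_exists xH.
have : y \in [set v | twin H x v].
  apply: subsetP yH; apply: (nonleaves_closed (x := x)); first by rewrite inE twin_refl.
  move=> u v + vH euv; rewrite !inE => txu; have /twinP[_ _ cxu] := txu.
  have : v \in cnbhd e H x by rewrite cxu in_cnbhd vH euv orbT.
  rewrite in_cnbhd vH /= => /orP[/eqP-> | exv]; first exact: twin_refl.
  by move: (no_out v vH); rewrite exv negbK.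
by move: xC; rewrite !inE => /forallP/(_ y) /implyP/[apply]; rewrite inE (negbTE nly).
Qed.

Lemma twin_cover_nonleaves : twin_cover (H :\: pruned) (W :\: pruned).
Proof.
split; first exact: setSD nonleaves_sub.
move=> b /setDP[bW]; rewrite inE => nlb.
case bH : (b \in H).
  by exists b; [rewrite in_setD bH inE nlb | apply: twin_refl; rewrite in_setD bW inE nlb].
move: bH; rewrite in_nonleaves => /negbFE bl.
have [s sH tbs] := leaf_twin_neighbour bW bl nlb.
have nls : ~~ leaf_class W s by rewrite -(leaf_class_twin tbs).
have sW := subsetP nonleaves_sub s sH.
exists s; first by rewrite in_setD sH inE nls.
by apply: (twin_sub (subsetDl W pruned) _ _ (twin_sym tbs)); rewrite in_setD inE ?nls ?nlb.
Qed.

Lemma twin_cover_core : twin_cover (H :\: pruned) (H :\: core).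
Proof.
split.
  apply/subsetP => x /setDP[xH xD]; rewrite inE xH andbT.
  by apply: contra xD; apply: core_pruned.
move=> b /setDP[bH bC]; move: (bC); rewrite inE negb_forall => /existsP[y].
rewrite negb_imply => /andP[tby yD]; have yH : y \in H by case/twinP: tby.
have yC : y \notin core by apply: contra yD; apply: core_pruned.
exists y; first by rewrite inE yD.
by apply: (twin_sub (subsetDl H core) _ _ (twin_sym tby)); rewrite in_setD ?yC ?bC.
Qed.

Lemma rho_lam_rho_commute :
  exists2 V : {set T}, V \subset leaves e (rho e H) &
    iso e (rho e (lam e (rho e W))) (rho e (rho e H :\: V)).
Proof.
exists (rho e H :&: core).
  apply/subsetP => x /setIP[xr xC]; have xH := subsetP (rho_sub H) x xr.
  by have /andP[_] := leaf_class_core xH xC; rewrite rep_id.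
have -> : rho e H :\: (rho e H :&: core) = rho e H :\: core.
  by rewrite setDIr setDv set0U.
have pruned_closed x y : twin W x y -> x \in pruned -> y \in pruned.
  by move=> txy; rewrite !inE (leaf_class_twin txy).
have core_closed x y : twin H x y -> x \in core -> y \in core.
  rewrite !inE => txy /forallP coreX; apply/forallP => z; apply/implyP => tyz.
  exact: implyP (coreX z) (twin_trans txy tyz).
rewrite lam_rho.
apply: iso_trans (twin_cover_iso (twin_cover_rhoD pruned_closed)) _.
apply: iso_trans (iso_sym (twin_cover_iso twin_cover_nonleaves)) _.
apply: iso_trans (twin_cover_iso twin_cover_core) _.
exact: iso_sym (twin_cover_iso (twin_cover_rhoD core_closed)).
Qed.

End ConnectedGraph.
End Twins.

Theorem theorem5p1 (T : finType) (e : rel T) :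
  symmetric e -> irreflexive e -> (forall x y, connect e x y) ->
  ~ isK2 e [set: T] ->
  forall U : {set T}, U \subset leaves e [set: T] ->
  exists V : {set T},
    V \subset leaves e (rho e (lam e [set: T])) /\
    iso e (rho e (lam e (rho e (lamS U [set: T]))))
          (rho e (lamS V (rho e (lam e [set: T])))).
Proof.
move=> e_sym e_irr e_conn not_K2 U sUL.
have nonleaves_sub : lam e [set: T] \subset lamS U [set: T].
  by apply/subsetP => x; rewrite !in_setD !in_setT !andbT; apply: contra => /(subsetP sUL).
have [V sVL isoV] := rho_lam_rho_commute e_sym e_irr e_conn not_K2 nonleaves_sub.
by exists V.
Qed.
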